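(* Let $P$ be a lattice-face $d$-simplex with vertices $v_1,\dots,v_{d+1}$. For every $\sigma\in\mathfrak S_d$, every $1\le k\le d$ and every $0\le j\le k-1$, $$\frac{\mathfrak m(\sigma,k;j)}{\det Y(\sigma,k)}\in\mathbb Z .$$
   Context: Write $v_i=(x_{i,1},\dots,x_{i,d})$. $Y(\sigma,k)$ is the $k\times k$ matrix with rows $(1,x_{\sigma(r),1},\dots,x_{\sigma(r),k-1})$, $r=1,\dots,k$. Let $A(\sigma,k)$ be the $k\times(k+1)$ matrix with rows $(1,x_{\sigma(r),1},\dots,x_{\sigma(r),k})$, $r=1,\dots,k$, with columns indexed $1,\dots,k+1$; $\mathfrak m(\sigma,k;j)$ is the determinant of the $k\times k$ matrix obtained from $A(\sigma,k)$ by deleting column $j+1$ (so $\mathfrak m(\sigma,k;k)=\det Y(\sigma,k)$). Lattice-face polytopes are defined recursively, with $\pi:\mathbb R^d\to\mathbb R^{d-1}$ forgetting the last coordinate: a segment in $\mathbb R$ is lattice-face if its endpoints are integers; for $d\ge2$, a $d$-polytope $P\subset\mathbb R^d$ with vertex set $V$ is lattice-face if for every $d$-element $U\subset V$: (a) $\pi(\mathrm{conv}(U))$ is a lattice-face polytope in $\mathbb R^{d-1}$, and (b) $\pi(H_U\cap\mathbb Z^d)=\mathbb Z^{d-1}$, $H_U$ the affine span of $U$. *)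

From HB Require Import structures.
From mathcomp Require Import all_boot all_order all_algebra all_fingroup.
From mathcomp Require Import boolp reals.
Set Implicit Arguments. Unset Strict Implicit. Unset Printing Implicit Defensive.
Import Order.TTheory GRing.Theory Num.Theory.
Local Open Scope ring_scope.

Section LatticeFace.
Variable R : realType.

Definition is_intR (x : R) : Prop := exists z : int, x = z%:~R.

Definition int_pt n (x : 'rV[R]_n) : Prop := forall i, is_intR (x 0 i).

Definition in_conv n (S : seq 'rV[R]_n) (x : 'rV[R]_n) : Prop :=
  exists l : 'I_(size S) -> R,
    (forall i, 0 <= l i) /\ \sum_i l i = 1 /\ x = \sum_i l i *: S`_i.

Definition in_aff n (S : seq 'rV[R]_n) (x : 'rV[R]_n) : Prop :=
  exists l : 'I_(size S) -> R, \sum_i l i = 1 /\ x = \sum_i l i *: S`_i.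

Definition vertices n (S : seq 'rV[R]_n) : seq 'rV[R]_n :=
  [seq x <- undup S | `[< ~ in_conv (rem x (undup S)) x >] ].

Definition full_dim n (S : seq 'rV[R]_n) : Prop := forall x, in_aff S x.

Definition proj_last n (x : 'rV[R]_n.+1) : 'rV[R]_n :=
  \row_(i < n) x 0 (widen_ord (leqnSn n) i).

Fixpoint lattice_face (n : nat) : seq 'rV[R]_n.+1 -> Prop :=
  match n return seq 'rV[R]_n.+1 -> Prop with
  | 0 => fun S =>
      size (vertices S) = 2%N /\ (forall x, x \in vertices S -> int_pt x)
  | m.+1 => fun S =>
      full_dim (vertices S) /\
      forall U : seq 'rV[R]_m.+2,
        subseq U (vertices S) -> size U = m.+2 ->
        @lattice_face m (map (@proj_last m.+1) U) /\
        (forall y : 'rV[R]_m.+1,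
            int_pt y <-> exists x, [/\ in_aff U x, int_pt x & proj_last x = y])
  end.

Definition aff_indep n m (v : 'I_m -> 'rV[R]_n) : Prop :=
  forall l : 'I_m -> R, \sum_i l i = 0 -> \sum_i l i *: v i = 0 -> forall i, l i = 0.

Section Minors.
Variables (n : nat) (v : 'I_n.+2 -> 'rV[R]_n.+1) (s : 'S_n.+1) (k : nat).

(* 0-indexed coordinate c of the vertex v_{sigma(r)} (vertices v_1..v_d) *)
Definition xco (r : 'I_k) (c : nat) : R :=
  v (widen_ord (leqnSn n.+1) (s (inord r))) 0 (inord c).

(* A(sigma,k): k x (k+1), rows (1, x_{sigma(r),1}, ..., x_{sigma(r),k}) *)
Definition Amx : 'M[R]_(k, k.+1) :=
  \matrix_(r < k, c < k.+1) (if c == 0 :> nat then 1 else xco r c.-1).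

(* Y(sigma,k): k x k, rows (1, x_{sigma(r),1}, ..., x_{sigma(r),k-1}) *)
Definition Ymx : 'M[R]_k :=
  \matrix_(r < k, c < k) (if c == 0 :> nat then 1 else xco r c.-1).

(* m(sigma,k;j): determinant of A(sigma,k) with (1-indexed) column j+1 deleted *)
Definition mminor (j : nat) : R :=
  \det (\matrix_(r < k, c < k) Amx r (lift (inord j : 'I_k.+1) c)).

End Minors.
End LatticeFace.
Arguments lattice_face {R} n _.

(* Write Y for the k x k matrix of the points (1, x_1, ..., x_{k-1}) of k
   vertices and b for the column of their k-th coordinates. When det Y <> 0,
   let a solve Y a = b: deleting a column from A = [Y | b] gives Y N, where N
   has unit columns and the column a, so the quotient is det N, an integer as
   soon as a is integral. For k < d, projecting away the last coordinate keeps
   Y and b and lands in a lattice-face simplex of lower dimension, so we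
   induct. For k = d the vertices span a facet hyperplane H on which
   x_d = a . (1, x_1, ..., x_{d-1}); since pi (H /\ Z^d) = Z^{d-1}, this
   affine function is integral at every integer point, which forces a to be
   integral. *)

From HB Require Import structures.
From mathcomp Require Import all_boot all_order all_algebra all_fingroup.
From mathcomp Require Import boolp reals.
From mathcomp Require Import zify.
Set Implicit Arguments. Unset Strict Implicit. Unset Printing Implicit Defensive.
Import Order.TTheory GRing.Theory Num.Theory.
Local Open Scope ring_scope.

Section DeleteColumn.
Variables (F : comPzRingType) (k : nat).

Definition drop_last_col (A : 'M[F]_(k, k.+1)) : 'M[F]_k :=
  \matrix_(r, c) A r (widen_ord (leqnSn k) c).

Definition delcol_coef (a : 'cV[F]_k) (j : 'I_k.+1) : 'M[F]_k :=
  \matrix_(i, c) if (lift j c < k)%N then (i == lift j c :> nat)%:R else a i 0.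

(* The columns of A other than the last are columns of Y, the last is Y a. *)
Lemma delcol_mulmx (A : 'M[F]_(k, k.+1)) (a : 'cV[F]_k) (j : 'I_k.+1) :
  drop_last_col A *m a = col ord_max A ->
  \matrix_(r, c) A r (lift j c) = drop_last_col A *m delcol_coef a j.
Proof.
move=> Aa; apply/matrixP => r c; rewrite !mxE.
have [ltk|] := ltnP (lift j c) k.
  rewrite (bigD1 (Ordinal ltk)) //= !mxE eqxx ltk mulr1 big1 ?addr0.
    by congr (A r _); apply: val_inj.
  move=> i /negbTE ne; rewrite !mxE ltk.
  suff -> : (i == lift j c :> nat) = false by rewrite mulr0.
  by apply: contraFF ne => /eqP e; apply/eqP/val_inj.
move=> gek; have -> : lift j c = ord_max.
  by apply/val_inj/eqP; rewrite eqn_leq -ltnS ltn_ord.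
have := congr1 (fun M : 'cV[F]_k => M r 0) Aa; rewrite !mxE => <-.
by apply: eq_bigr => i _; rewrite !mxE ltnNge gek.
Qed.

End DeleteColumn.

Lemma det_int_num (F : archiNumDomainType) k (M : 'M[F]_k) :
  (forall i j, M i j \is a Num.int) -> \det M \is a Num.int.
Proof.
move=> Mint; rewrite rpred_sum // => sg _.
by rewrite rpredMsign rpred_prod.
Qed.

Lemma delcol_coef_int (F : archiNumDomainType) k (a : 'cV[F]_k) j :
  (forall i, a i 0 \is a Num.int) -> \det (delcol_coef a j) \is a Num.int.
Proof.
by move=> aint; apply: det_int_num => i c; rewrite mxE; case: ifP; rewrite ?natr_int.
Qed.

Lemma exists_rem_superset (T : eqType) (s W : seq T) :
  uniq W -> {subset s <= W} -> (size s < size W)%N ->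
  exists2 w, w \in W & {subset s <= rem w W}.
Proof.
move=> Wuniq sW ltsW.
have /allPn[w wW ws] : ~~ all (mem s) W.
  by apply: contraTN ltsW => /allP/(uniq_leq_size Wuniq); rewrite -leqNgt.
exists w => // x xs; rewrite mem_rem_uniq // inE sW // andbT.
by apply: contraNneq ws => <-.
Qed.

Section LatticeFaceSimplex.
Variable R : realType.

Lemma is_intRP (x : R) : reflect (is_intR x) (x \is a Num.int).
Proof. exact: intrP. Qed.

(* Coordinate c of the point (1, x) of R^(D+2); only meaningful for c <= D+1. *)
Definition hcoord D (c : nat) (x : 'rV[R]_D.+1) : R :=
  if c == 0 then 1 else x 0 (inord c.-1).

Lemma hcoord_affine D (S : seq 'rV[R]_D.+1) (l : 'I_(size S) -> R) x c :
  \sum_i l i = 1 -> x = \sum_i l i *: S`_i ->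
  hcoord c x = \sum_i l i * hcoord c S`_i.
Proof.
rewrite /hcoord => l1 ->; case: eqP => _.
  by under eq_bigr do rewrite mulr1.
by rewrite summxE; apply: eq_bigr => i _; rewrite mxE.
Qed.

Lemma in_aff_hcoord_relation D (S : seq 'rV[R]_D.+1) K (a : 'I_K -> R) e x :
  (forall u, u \in S -> hcoord e u = \sum_c a c * hcoord c u) ->
  in_aff S x -> hcoord e x = \sum_c a c * hcoord c x.
Proof.
move=> Srel [l [l1 xl]]; rewrite (hcoord_affine e l1 xl).
under eq_bigr => i _ do rewrite Srel ?mem_nth // mulr_sumr.
rewrite exchange_big /=; apply: eq_bigr => c _.
rewrite (hcoord_affine c l1 xl) mulr_sumr.
by apply: eq_bigr => i _; rewrite mulrCA.
Qed.

Lemma hcoord_proj_last D c (x : 'rV[R]_D.+2) :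
  (c <= D.+1)%N -> hcoord c (proj_last x) = hcoord c x.
Proof.
rewrite /hcoord => cD; case: eqP => // /eqP c0; rewrite mxE.
by congr (x 0 _); apply: val_inj; rewrite /= !inordK //; lia.
Qed.

Lemma full_dim_size D (V : seq 'rV[R]_D.+1) : full_dim V -> (D.+1 < size V)%N.
Proof.
move=> Vfull.
pose hom (x : 'rV[R]_D.+1) : 'rV[R]_D.+2 := \row_j hcoord j x.
pose B : 'M[R]_(size V, D.+2) := \matrix_(i, j) hcoord j V`_i.
have homB x : (hom x <= B)%MS.
  have [l [l1 xl]] := Vfull x; apply/submxP; exists (\row_i l i).
  apply/rowP => j; rewrite !mxE (hcoord_affine j l1 xl).
  by apply: eq_bigr => i _; rewrite !mxE.
have allB (u : 'rV[R]_D.+2) : (u <= B)%MS.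
  (* (1, x) and (1, 0) span R^(D+2) *)
  have -> : u = hom (\row_i u 0 (inord i.+1)) + (u 0 0 - 1) *: hom 0.
    apply/rowP => j; rewrite !mxE /hcoord; case: eqP => [j0|/eqP j0].
      by rewrite (_ : j = 0) ?mulr1 ?subrKC //; apply/val_inj.
    rewrite !mxE mulr0 addr0; congr (u 0 _); apply/val_inj.
    by rewrite /= !inordK; have := ltn_ord j; lia.
  by rewrite addmx_sub ?scalemx_sub ?homB.
have : (1%:M <= B)%MS by apply/row_subP => i; apply: allB.
by move/mxrankS; rewrite mxrank1 => /leq_trans; apply; apply: rank_leq_row.
Qed.

Lemma vertices_subseq n (S : seq 'rV[R]_n) : subseq (vertices S) S.
Proof. exact: subseq_trans (filter_subseq _ _) (undup_subseq S). Qed.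

Lemma vertices_uniq n (S : seq 'rV[R]_n) : uniq (vertices S).
Proof. exact: filter_uniq (undup_uniq S). Qed.

Lemma lattice_face_vertices m (W : seq 'rV[R]_m.+1) :
  lattice_face m W -> size W = m.+2 -> vertices W = W.
Proof.
move=> Wlf sW; apply/eqP; rewrite -(size_subseq_leqif (vertices_subseq W)).2.
rewrite eqn_leq size_subseq ?vertices_subseq // sW.
by case: m W Wlf sW => [|m] W [Wv _] _; [rewrite Wv | exact: full_dim_size].
Qed.

Lemma int_coef_of_int_valued D (a : 'I_D.+2 -> R) :
  (forall y : 'rV[R]_D.+1, int_pt y -> \sum_c a c * hcoord c y \is a Num.int) ->
  forall c, a c \is a Num.int.
Proof.
move=> aint.
have a0 : a 0 \is a Num.int.
  have := aint 0 (fun i => ltac:(rewrite mxE; exact/is_intRP/int_num0)).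
  rewrite big_ord_recl big1 ?addr0 ?mulr1 // => i _.
  by rewrite /hcoord /= mxE mulr0.
move=> c; have [i ->|-> //] := unliftP ord0 c.
have := aint (delta_mx 0 i) (fun j => ltac:(rewrite mxE; exact/is_intRP/natr_int)).
rewrite big_ord_recl (bigD1 i) //= big1 ?addr0 => [|j ji].
  by rewrite /hcoord /= mulr1 inord_val mxE !eqxx mulr1 rpredDl.
by rewrite /hcoord /= inord_val mxE eqxx (negbTE ji) mulr0.
Qed.

Definition hmx D k (p : 'I_k -> 'rV[R]_D.+1) : 'M[R]_k :=
  \matrix_(r, c) hcoord c (p r).

Definition hcol D k (p : 'I_k -> 'rV[R]_D.+1) : 'cV[R]_k :=
  \col_r hcoord k (p r).

Lemma hmx_inj D k (p : 'I_k -> 'rV[R]_D.+1) : \det (hmx p) != 0 -> injective p.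
Proof.
move=> dY r1 r2 e; apply: contraNeq dY => ne.
by apply/eqP/(determinant_alternate ne) => c; rewrite !mxE e.
Qed.

Lemma hmx_proj_last D k (p : 'I_k -> 'rV[R]_D.+2) :
  (k <= D.+2)%N -> hmx (fun r => proj_last (p r)) = hmx p.
Proof.
by move=> kD; apply/matrixP => r c; rewrite !mxE hcoord_proj_last //; have := ltn_ord c; lia.
Qed.

Lemma hcol_proj_last D k (p : 'I_k -> 'rV[R]_D.+2) :
  (k <= D.+1)%N -> hcol (fun r => proj_last (p r)) = hcol p.
Proof. by move=> kD; apply/matrixP => r c; rewrite !mxE hcoord_proj_last. Qed.

Lemma lifting_solution_int m (U : seq 'rV[R]_m.+2) (p : 'I_m.+2 -> 'rV[R]_m.+2)
    (a : 'cV[R]_m.+2) :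
  (forall y : 'rV[R]_m.+1, int_pt y ->
     exists x, [/\ in_aff U x, int_pt x & proj_last x = y]) ->
  {subset U <= codom p} -> hmx p *m a = hcol p -> forall c, a c 0 \is a Num.int.
Proof.
move=> Ulift Up Ya.
have rel u : u \in U -> hcoord m.+2 u = \sum_c a c 0 * hcoord c u.
  move=> /Up/codomP[r ->].
  have := congr1 (fun M : 'cV[R]_m.+2 => M r 0) Ya; rewrite !mxE => <-.
  by apply: eq_bigr => c _; rewrite mxE mulrC.
apply: (int_coef_of_int_valued (a := fun c => a c 0)) => y /Ulift[x [xU xint <-]].
have hp (c : 'I_m.+2) := @hcoord_proj_last m c x (ltn_ord c).
under eq_bigr => c _ do rewrite hp.
by rewrite -(in_aff_hcoord_relation rel xU); apply/is_intRP/xint.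
Qed.

Lemma lattice_face_solution_int m (W : seq 'rV[R]_m.+1) :
  lattice_face m W -> size W = m.+2 ->
  forall k (p : 'I_k -> 'rV[R]_m.+1) (a : 'cV[R]_k),
  (0 < k <= m.+1)%N -> (forall r, p r \in W) -> \det (hmx p) != 0 ->
  hmx p *m a = hcol p -> forall c, a c 0 \is a Num.int.
Proof.
elim: m W => [|m IH] W Wlf sW k p a /andP[k0 km] pW dY Ya.
  have k1 : k = 1%N by lia.
  subst k => c; rewrite (ord1 c).
  have := congr1 (fun M : 'cV[R]_1 => M 0 0) Ya.
  rewrite !mxE big_ord1 !mxE /hcoord /= mul1r => ->.
  have [_ Wint] := Wlf; apply/is_intRP/Wint.
  by rewrite lattice_face_vertices.
have [_ Wfacets] := Wlf; rewrite lattice_face_vertices // in Wfacets.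
have [w wW pU] : exists2 w, w \in W & {subset codom p <= rem w W}.
  apply: exists_rem_superset; first by rewrite -(lattice_face_vertices Wlf sW) vertices_uniq.
    by move=> _ /codomP[r ->].
  by rewrite size_codom card_ord sW; lia.
have sU : size (rem w W) = m.+2 by rewrite size_rem // sW.
have [Ulf Uint] := Wfacets _ (rem_subseq w W) sU.
have [ltk|gek] := ltnP k m.+2.
  apply: (IH _ Ulf (etrans (size_map _ _) sU) k (fun r => proj_last (p r))).
  - by rewrite k0.
  - by move=> r; apply/map_f/pU/codom_f.
  - by rewrite hmx_proj_last //; lia.
  - by rewrite hmx_proj_last ?hcol_proj_last //; lia.
have ek : k = m.+2 by lia.
subst k; apply: (lifting_solution_int (fun y => (Uint y).1) _ Ya).
have p_uniq : uniq (codom p).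
  by rewrite /codom /image_mem (map_inj_uniq (hmx_inj dY)) enum_uniq.
move=> u; rewrite -(uniq_min_size p_uniq pU _).2 //.
by rewrite size_codom card_ord sU.
Qed.

End LatticeFaceSimplex.

Theorem mainTheorem8 (R : realType) (n : nat) (v : 'I_n.+2 -> 'rV[R]_n.+1) :
  aff_indep v ->
  lattice_face n [seq v i | i : 'I_n.+2] ->
  forall (s : 'S_n.+1) (k j : nat),
    (1 <= k <= n.+1)%N -> (j < k)%N ->
    is_intR (mminor v s k j / \det (Ymx v s k)).
Proof.
move=> _ vlf s k j kn _; apply/is_intRP.
have [->|dY] := eqVneq (\det (Ymx v s k)) 0; first by rewrite invr0 mulr0.
pose p (r : 'I_k) := v (widen_ord (leqnSn n.+1) (s (inord r))).
have Yp : Ymx v s k = hmx p by apply/matrixP => r c; rewrite !mxE.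
have YA : Ymx v s k = drop_last_col (Amx v s k) by apply/matrixP => r c; rewrite !mxE.
have Ap : col ord_max (Amx v s k) = hcol p by apply/matrixP => r c; rewrite !mxE.
pose a := invmx (Ymx v s k) *m hcol p.
have Ya : Ymx v s k *m a = hcol p by rewrite mulKVmx // unitmxE unitfE.
have a_int : forall c, a c 0 \is a Num.int.
  apply: (@lattice_face_solution_int R n _ vlf _ k p a kn); rewrite -?Yp //.
    by rewrite size_map size_enum_ord.
  by move=> r; apply: map_f; rewrite mem_enum.
rewrite /mminor (delcol_mulmx (A := Amx v s k) (a := a) (inord j)) -?YA ?Ap //.
by rewrite det_mulmx mulrC mulKf // delcol_coef_int.
Qed.
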